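(* Let $k\ge 3$ and let $w$ be a word over $\{a,b\}$. Let $p,q\in\{u,v\}$ be two consecutive, non-overlapping occurrences in $w$ (with $p$ occurring before $q$), and let $pxq$ be the corresponding factor of $w$, where $|x|\ge 0$. Let $F_p,F_q\subseteq\{0,\dots,k-1\}$ be the sets of forbidden local positions in $p$ and $q$ respectively. Then $$F_p\subseteq\{(j+|x|)\bmod k \mid j\in F_q\}\cup\{0\}.$$
   Context: $\Sigma=\{a,b\}$. For $k\ge 3$, $S_k=\left(\Sigma^k\setminus\{ba^{k-1},b^{k-1}a\}\right)\cup\left(\Sigma^{k-1}\setminus\{a^{k-1},b^{k-1}\}\right)$, $u=ba^{k-1}$, $v=b^{k-1}a$. $\mathit{Pref}(S^* )$ denotes the set of all prefixes of words in $S^*$. For $w=w_1\cdots w_n$, $w[i..j]=w_i\cdots w_j$ (empty if $i>j$). A position $j$, $0\le j\le n-1$, is forbidden in $w$ if $w[j+1..n]\notin\mathit{Pref}(S_k^* )$. An occurrence of $p\in\{u,v\}$ in $w$ is an index $s$ with $w[s+1..s+k]=p$; local position $i\in\{0,\dots,k-1\}$ of the occurrence is the position $s+i$ of $w$, and it is forbidden in the occurrence if $s+i$ is forbidden in $w$. Two occurrences of words from $\{u,v\}$ starting at $s<t$ overlap if $t<s+k$; they are consecutive if either they overlap or they are the only occurrences of $u$ or $v$ lying inside the factor $w[s+1..t+k]$. *)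

From mathcomp Require Import all_boot.
Set Implicit Arguments. Unset Strict Implicit. Unset Printing Implicit Defensive.

Definition la : bool := false.
Definition lb : bool := true.
Definition word := seq bool.

Definition uw (k : nat) : word := lb :: nseq k.-1 la.
Definition vw (k : nat) : word := nseq k.-1 lb ++ [:: la].

Definition inS (k : nat) (s : word) : bool :=
  ((size s == k) && (s != uw k) && (s != vw k))
  || ((size s == k.-1) && (s != nseq k.-1 la) && (s != nseq k.-1 lb)).

Definition inPrefSstar (k : nat) (w : word) : Prop :=
  exists ws : seq word, all (inS k) ws /\ prefix w (flatten ws).

(* position j (0 <= j <= |w|-1) is forbidden in w: w[j+1..n] \notin Pref(S_k^* ) *)
Definition forbidden (k : nat) (w : word) (j : nat) : Prop :=
  j < size w /\ ~ inPrefSstar k (drop j w).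

Definition occ (k : nat) (w : word) (s : nat) : bool :=
  (take k (drop s w) == uw k) || (take k (drop s w) == vw k).

(* Read from a local position i > 0 of the occurrence p, the word splits into
   blocks of length k up to a position t + j inside q.  No block starts at an
   occurrence of u or v, since p and q are consecutive and the first block is
   not p itself, so every block is a word of S_k.
   Hence if t + j were not forbidden, neither would s + i be; and t + j lands
   in q at the local position j with j + |x| = i modulo k. *)
From mathcomp Require Import all_boot.
From mathcomp Require Import zify.

Set Implicit Arguments.
Unset Strict Implicit.

Lemma size_uw k : size (uw k) = k.-1.+1.
Proof. by rewrite /= size_nseq. Qed.

Lemma size_vw k : size (vw k) = k.-1.+1.
Proof. by rewrite size_cat size_nseq addn1. Qed.

Section Windows.

Variables (k : nat) (w : word).

Lemma occ_bound r : occ k w r -> r + k <= size w.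
Proof.
have size_window : size (take k (drop r w)) = minn k (size w - r).
  by rewrite size_take_min size_drop.
by rewrite /occ => /orP[] /eqP hwin; move: size_window;
  rewrite hwin ?size_uw ?size_vw; lia.
Qed.

Lemma inS_window r : r + k <= size w -> ~~ occ k w r -> inS k (take k (drop r w)).
Proof.
move=> hr; rewrite /occ negb_or => /andP[not_u not_v].
by rewrite /inS size_takel ?size_drop ?leq_subRL ?(leq_trans (leq_addr _ _) hr)
  // eqxx not_u not_v.
Qed.

Lemma inPrefSstar_window r : r + k <= size w -> ~~ occ k w r ->
  inPrefSstar k (drop (r + k) w) -> inPrefSstar k (drop r w).
Proof.
move=> hr not_occ [ws [ws_S /prefixP[z hz]]].
exists (take k (drop r w) :: ws); split; first by rewrite /= ws_S inS_window.
rewrite -{1}(cat_take_drop k (drop r w)) drop_drop addnC /= hz catA.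
exact: prefix_prefix.
Qed.

Lemma inPrefSstar_windows a N : a + N * k <= size w ->
  (forall c, c < N -> ~~ occ k w (a + c * k)) ->
  inPrefSstar k (drop (a + N * k) w) -> inPrefSstar k (drop a w).
Proof.
elim: N a => [|N IH] a hsize not_occ; first by rewrite addn0.
have hsize' : a + k + N * k <= size w by rewrite -addnA -mulSn.
move=> hpref; apply: inPrefSstar_window; first lia.
  by have := not_occ 0 isT; rewrite mul0n addn0.
apply: IH => // [c hc|]; last by rewrite -addnA -mulSn.
by rewrite -addnA -mulSn; exact: not_occ.
Qed.

End Windows.

Lemma round_up_by_multiple a b k : a < b -> 0 < k ->
  exists2 N, 0 < N & exists2 j, j < k & a + N * k = b + j.
Proof.
move=> ab k0; exists ((b - a).-1 %/ k).+1 => //.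
exists (k.-1 - (b - a).-1 %% k); first lia.
have := divn_eq (b - a).-1 k; have := ltn_pmod (b - a).-1 k0; nia.
Qed.

Theorem lemma3 (k : nat) (hk : 3 <= k) (w : word) (s t : nat) :
  occ k w s -> occ k w t -> s + k <= t ->
  (forall r, occ k w r -> s <= r -> r + k <= t + k -> r = s \/ r = t) ->
  forall i, i < k -> forbidden k w (s + i) ->
    i = 0 \/ exists2 j, j < k & forbidden k w (t + j) /\ i = (j + (t - s - k)) %% k.
Proof.
move=> _ occ_t hst consecutive i hi [_ not_pref_i].
have k0 : 0 < k by lia.
have [-> | i0] := posnP i; [by left | right].
have [|N N0 [j hj hN]] := @round_up_by_multiple (s + i) t k _ k0;
  first lia.
have t_bound := occ_bound occ_t.
exists j => //; split; last first.
  have -> : j + (t - s - k) = N.-1 * k + i by move: hN; case: N N0 => // N _; nia.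
  by rewrite modnMDl modn_small.
split=> [|pref_j]; first lia.
apply: not_pref_i; apply: (inPrefSstar_windows (N := N)); rewrite ?hN //; first lia.
move=> c hc; apply/negP => occ_c.
have : c.+1 * k <= N * k by rewrite leq_mul2r hc orbT.
by case: (consecutive _ occ_c); nia.
Qed.
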